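(* Let $\mathbf{L}$ be a Euclidean modal logic. For every first-order sentence $A$, $A$ is modally definable in $\mathtt{Fr}(\mathbf{L})$ if and only if both of the following hold: (i) for every Euclidean frame $(W,R)$ in which $\mathbf{L}$ is valid, $(W,R)\models A$ if and only if $(W_s,R_s)\models A$ for all $s\in W$; (ii) for all flowers $\mathcal{F}_m^n,\mathcal{F}_{m'}^{n'}$, if $\mathbf{L}$ is valid in $\mathcal{F}_m^n$, $\mathcal{F}_m^n\models A$ and $\mathcal{F}_{m'}^{n'}$ is a bounded morphic image of $\mathcal{F}_m^n$, then $\mathcal{F}_{m'}^{n'}\models A$.
   Context: A frame is a pair $(W,R)$ with $W$ a non-empty set and $R\subseteq W\times W$; it is Euclidean if for all $s,t,u\in W$, $sRt$ and $sRu$ imply $tRu$ and $uRt$. Modal formulas (propositional variables, $\bot,\neg,\vee,\Box$) have standard Kripke semantics; validity in a frame means truth at all points under all valuations. A (normal) modal logic is a set of modal formulas containing all tautologies and the K axioms, closed under uniform substitution, modus ponens and necessitation; a Euclidean modal logic is one not containing $\bot$ and containing $\Diamond\varphi\to\Box\Diamond\varphi$ for all $\varphi$. $\mathtt{Fr}(\mathbf{L})$ is the class of frames validating $\mathbf{L}$. First-order sentences use one binary relation symbol $\mathbf{R}$ and equality. A sentence $A$ is modally definable in a class $\mathcal{C}$ if there is a modal formula $\varphi$ with $\mathcal{F}\models\varphi\iff\mathcal{F}\models A$ for all $\mathcal{F}\in\mathcal{C}$. $(W,R)$ is a generated subframe of $(W',R')$ if $W\subseteq W'$, $R\subseteq R'$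 and whenever $s\in W$ and $sR't'$ then $t'\in W$ and $sRt'$; $(W_s,R_s)$ denotes the least generated subframe of $(W,R)$ containing $s$. A map $f:W'\to W$ is a bounded morphism from $(W',R')$ to $(W,R)$ if $s'R't'$ implies $f(s')Rf(t')$, and $f(s')Rt$ implies there is $t'$ with $s'R't'$ and $f(t')=t$; $(W,R)$ is a bounded morphic image of $(W',R')$ if there is a surjective bounded morphism. For $m\ge1$, $n\ge0$ integers, the flower $\mathcal{F}_m^n$ has universe $\{0,\dots,m+n\}$ and relation $(\{0\}\times\{1,\dots,m\})\cup\{1,\dots,m+n\}^2$; for $m\ge1$, $\mathcal{F}_m^{-1}$ has universe $\{1,\dots,m\}$ and relation $\{1,\dots,m\}^2$. *)

From Stdlib Require Import ZArith Relations Lia Bool.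
Set Implicit Arguments.

Record frame := Frame {
  fW :> Type;
  fR : fW -> fW -> Prop;
  fne : inhabited fW
}.

Definition euclidean (F : frame) : Prop :=
  forall s t u : F, fR F s t -> fR F s u -> fR F t u /\ fR F u t.

Inductive mform :=
| MVar : nat -> mform
| MBot : mform
| MNeg : mform -> mform
| MOr  : mform -> mform -> mform
| MBox : mform -> mform.

Definition MImp (a b : mform) := MOr (MNeg a) b.
Definition MDia (a : mform) := MNeg (MBox (MNeg a)).

Fixpoint msat (F : frame) (V : nat -> F -> Prop) (w : F) (phi : mform) : Prop :=
  match phi with
  | MVar p => V p w
  | MBot => False
  | MNeg a => ~ msat F V w a
  | MOr a b => msat F V w a \/ msat F V w b
  | MBox a => forall v, fR F w v -> msat F V v a
  end.

Definition mvalid (F : frame) (phi : mform) : Prop :=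
  forall (V : nat -> F -> Prop) (w : F), msat F V w phi.

Fixpoint peval (v : mform -> bool) (phi : mform) : bool :=
  match phi with
  | MVar _ => v phi
  | MBot => false
  | MNeg a => negb (peval v a)
  | MOr a b => orb (peval v a) (peval v b)
  | MBox _ => v phi
  end.

Definition tautology (phi : mform) : Prop := forall v, peval v phi = true.

Fixpoint msubst (sigma : nat -> mform) (phi : mform) : mform :=
  match phi with
  | MVar p => sigma p
  | MBot => MBot
  | MNeg a => MNeg (msubst sigma a)
  | MOr a b => MOr (msubst sigma a) (msubst sigma b)
  | MBox a => MBox (msubst sigma a)
  end.

Definition modal_logic (L : mform -> Prop) : Prop :=
  (forall phi, tautology phi -> L phi) /\
  (forall phi psi, L (MImp (MBox (MImp phi psi)) (MImp (MBox phi) (MBox psi)))) /\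
  (forall sigma phi, L phi -> L (msubst sigma phi)) /\
  (forall phi psi, L phi -> L (MImp phi psi) -> L psi) /\
  (forall phi, L phi -> L (MBox phi)).

Definition euclidean_logic (L : mform -> Prop) : Prop :=
  modal_logic L /\ ~ L MBot /\
  (forall phi, L (MImp (MDia phi) (MBox (MDia phi)))).

Definition validates (F : frame) (L : mform -> Prop) : Prop :=
  forall phi, L phi -> mvalid F phi.

Inductive foform :=
| FRel : nat -> nat -> foform
| FEq  : nat -> nat -> foform
| FBot : foform
| FNot : foform -> foform
| FAnd : foform -> foform -> foform
| FOr  : foform -> foform -> foform
| FImp : foform -> foform -> foform
| FAll : nat -> foform -> foform
| FEx  : nat -> foform -> foform.

Fixpoint free_in (x : nat) (A : foform) : Prop :=
  match A with
  | FRel i j | FEq i j => x = i \/ x = j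
  | FBot => False
  | FNot B => free_in x B
  | FAnd B C | FOr B C | FImp B C => free_in x B \/ free_in x C
  | FAll y B | FEx y B => x <> y /\ free_in x B
  end.

Definition sentence (A : foform) : Prop := forall x, ~ free_in x A.

Definition upd {W : Type} (g : nat -> W) (x : nat) (d : W) : nat -> W :=
  fun y => if Nat.eqb y x then d else g y.

Fixpoint fsat (F : frame) (g : nat -> F) (A : foform) : Prop :=
  match A with
  | FRel i j => fR F (g i) (g j)
  | FEq i j => g i = g j
  | FBot => False
  | FNot B => ~ fsat F g B
  | FAnd B C => fsat F g B /\ fsat F g C
  | FOr B C => fsat F g B \/ fsat F g C
  | FImp B C => fsat F g B -> fsat F g C
  | FAll x B => forall d : F, fsat F (upd g x d) B
  | FEx x B => exists d : F, fsat F (upd g x d) B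
  end.

Definition fmodels (F : frame) (A : foform) : Prop := forall g : nat -> F, fsat F g A.

Definition modally_definable (C : frame -> Prop) (A : foform) : Prop :=
  exists phi : mform, forall F : frame, C F -> (mvalid F phi <-> fmodels F A).

Definition Fr (L : mform -> Prop) : frame -> Prop := fun F => validates F L.

Definition gen_carrier (F : frame) (s : F) : Type :=
  { t : F | clos_refl_trans F (fR F) s t }.

Definition gen_subframe (F : frame) (s : F) : frame :=
  @Frame (@gen_carrier F s)
    (fun x y => fR F (proj1_sig x) (proj1_sig y))
    (inhabits (exist _ s (rt_refl _ _ s))).

Definition bounded_morphism (F' F : frame) (f : F' -> F) : Prop :=
  (forall s' t', fR F' s' t' -> fR F (f s') (f t')) /\
  (forall s' t, fR F (f s') t -> exists t', fR F' s' t' /\ f t' = t).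

Definition bm_image (F F' : frame) : Prop :=
  exists f : F' -> F, bounded_morphism F' F f /\ (forall t, exists s', f s' = t).

(* For integers m >= 1, n >= -1: F_m^n (n >= 0: universe {0..m+n};
   n = -1: universe {1..m}). Points are integers. *)
Definition flower_pt (m n k : Z) : bool :=
  if (0 <=? n)%Z then andb (0 <=? k)%Z (k <=? m + n)%Z
  else andb (1 <=? k)%Z (k <=? m)%Z.

Definition flower_carrier (m n : Z) : Type := { k : Z | flower_pt m n k = true }.

Definition flower_rel (m n : Z) (x y : flower_carrier m n) : Prop :=
  let k := proj1_sig x in let j := proj1_sig y in
  ((k = 0 /\ 1 <= j <= m) \/ (1 <= k /\ 1 <= j))%Z.

Lemma flower_pt_one (m n : Z) : (1 <= m)%Z -> (-1 <= n)%Z -> flower_pt m n 1 = true.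
Proof.
  intros Hm Hn. unfold flower_pt.
  destruct (0 <=? n)%Z eqn:E.
  - apply Z.leb_le in E. apply andb_true_intro; split; apply Z.leb_le; lia.
  - apply andb_true_intro; split; apply Z.leb_le; lia.
Qed.

Definition flower (m n : Z) (Hm : (1 <= m)%Z) (Hn : (-1 <= n)%Z) : frame :=
  @Frame (flower_carrier m n) (@flower_rel m n)
    (inhabits (exist _ 1%Z (flower_pt_one Hm Hn))).

(* Both conditions are necessary: frames of [L] are Euclidean, and modal validity passes to
   generated subframes, is reflected from all of them, and passes to bounded morphic images.

   Conversely, a point-generated Euclidean frame consists of its root, the petals (the
   successors of the root, which form a cluster) and the stem (the other points, seen from
   every petal), and its relation only depends on which of these kinds the two endpoints
   have.  An Ehrenfeucht-Fraisse argument therefore shows that it agrees on [A] with its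
   truncation: the flower whose numbers of petals and stem points are those of the frame,
   capped at [qr A + 1].  The truncation is a bounded morphic image of the frame.  The
   defining formula is the conjunction of the frame formulas of the finitely many small
   flowers (and of the one-point frame) that validate [L] and refute [A].  A generated
   subframe refuting [A] has such a flower as truncation, hence refutes its frame formula.
   If instead a frame formula is refuted at a point of a generated subframe satisfying [A],
   its flower is a bounded morphic image of the truncation at that point, which satisfies [A]
   by (i), so (ii) yields a contradiction.  Finally, (i) reduces the truth of [A] in a frame
   to its point-generated subframes, just as for modal validity. *)

From Stdlib Require Import ZArith Relations Lia List FinFun
  Classical ClassicalEpsilon ProofIrrelevance.
Import ListNotations.

Lemma proj1_sig_inj {A : Type} {P : A -> Prop} (x y : sig P) :
  proj1_sig x = proj1_sig y -> x = y.
Proof. destruct x, y; simpl; intros ->; apply subset_eq_compat; reflexivity. Qed.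

Lemma msat_dia F V w phi : msat F V w (MDia phi) <-> exists v, fR F w v /\ msat F V v phi.
Proof.
  simpl; split.
  - intros H; apply NNPP; intros Hno; apply H; intros v Hv Hphi; eauto.
  - intros [v [Hv Hphi]] H; exact (H v Hv Hphi).
Qed.

Lemma msat_imp F V w phi psi :
  msat F V w (MImp phi psi) <-> (msat F V w phi -> msat F V w psi).
Proof. simpl; tauto. Qed.

Section GeneratedSubframe.
Variables (F : frame) (s : F).

Definition gen_root : gen_subframe F s := exist _ s (rt_refl _ _ s).

Lemma gen_subframe_msat (VG : nat -> gen_subframe F s -> Prop) (V : nat -> F -> Prop) :
  (forall p x, VG p x <-> V p (proj1_sig x)) ->
  forall phi x, msat _ VG x phi <-> msat F V (proj1_sig x) phi.
Proof.
  intros HV phi; induction phi as [p| |phi IH|phi1 IH1 phi2 IH2|phi IH]; intros x; simpl.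
  - apply HV.
  - tauto.
  - rewrite IH; tauto.
  - rewrite IH1, IH2; tauto.
  - split.
    + intros H w Hw.
      apply (IH (exist _ w (rt_trans _ _ _ _ _ (proj2_sig x) (rt_step _ _ _ _ Hw)))).
      now apply H.
    + intros H y Hy. apply IH. now apply H.
Qed.

Lemma gen_subframe_mvalid phi :
  mvalid (gen_subframe F s) phi <->
  forall (V : nat -> F -> Prop) (x : gen_subframe F s), msat F V (proj1_sig x) phi.
Proof.
  split.
  - intros H V x. apply (gen_subframe_msat (fun p y => V p (proj1_sig y)) V); [tauto|].
    apply H.
  - intros H VG x.
    apply (gen_subframe_msat VG (fun p w => forall h, VG p (exist _ w h))); [|apply H].
    intros p [y hy]; simpl; split.
    + intros Hy h. now rewrite (proof_irrelevance _ h hy).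
    + intros Hh. apply Hh.
Qed.

Lemma gen_subframe_validates L : validates F L -> validates (gen_subframe F s) L.
Proof. intros H phi Hphi. apply gen_subframe_mvalid. intros; now apply H. Qed.

End GeneratedSubframe.

Lemma mvalid_iff_gen_subframes F phi :
  mvalid F phi <-> forall s : F, mvalid (gen_subframe F s) phi.
Proof.
  split.
  - intros H s. apply gen_subframe_mvalid. intros; apply H.
  - intros H V w. exact (proj1 (gen_subframe_mvalid F w phi) (H w) V (gen_root F w)).
Qed.

Lemma bounded_morphism_msat (F' F : frame) (f : F' -> F) (V : nat -> F -> Prop) :
  bounded_morphism F' F f ->
  forall phi s', msat F' (fun p x => V p (f x)) s' phi <-> msat F V (f s') phi.
Proof.
  intros [Hforth Hback] phi.
  induction phi as [p| |phi IH|phi1 IH1 phi2 IH2|phi IH]; intros s'; simpl.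
  - tauto.
  - tauto.
  - rewrite IH; tauto.
  - rewrite IH1, IH2; tauto.
  - split.
    + intros H t Ht. destruct (Hback s' t Ht) as [t' [Ht' <-]]. apply IH. auto.
    + intros H t' Ht'. apply IH. auto.
Qed.

Lemma bm_image_mvalid (F F' : frame) phi : bm_image F F' -> mvalid F' phi -> mvalid F phi.
Proof.
  intros [f [Hf Honto]] H V w. destruct (Honto w) as [s' <-].
  apply (bounded_morphism_msat F' F f V Hf). apply H.
Qed.

Lemma bm_image_validates (F F' : frame) L : bm_image F F' -> validates F' L -> validates F L.
Proof. intros Hb H phi Hphi. apply (bm_image_mvalid F F'); auto. Qed.

(* The axiom [<>p -> []<>p] with [p] true only at [u] forces [t R u] whenever [s R t] and [s R u]. *)
Lemma validates_euclidean L F : euclidean_logic L -> validates F L -> euclidean F.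
Proof.
  intros [_ [_ H5]] HF.
  assert (Hhalf : forall s t u : F, fR F s t -> fR F s u -> fR F t u).
  { intros s t u Hst Hsu.
    pose proof (HF _ (H5 (MVar 0)) (fun _ x => x = u) s) as Hs.
    rewrite msat_imp, msat_dia in Hs. simpl in Hs.
    specialize (Hs (ex_intro _ u (conj Hsu eq_refl)) t Hst).
    apply NNPP. intros Hn. apply Hs. intros v Hv ->. contradiction. }
  intros s t u Hst Hsu. split; eauto.
Qed.

Section Counting.
Context {X : Type}.

Definition atleast (P : X -> Prop) (j : nat) : Prop :=
  exists l : list X, length l = j /\ NoDup l /\ forall x, In x l -> P x.

Lemma atleast_impl (P Q : X -> Prop) j :
  (forall x, P x -> Q x) -> atleast P j -> atleast Q j.
Proof. intros H [l [Hlen [Hnd Hl]]]. exists l. auto. Qed.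

Lemma atleast_iff (P Q : X -> Prop) j :
  (forall x, P x <-> Q x) -> (atleast P j <-> atleast Q j).
Proof. intros H; split; apply atleast_impl; apply H. Qed.

Lemma atleast_0 (P : X -> Prop) : atleast P 0.
Proof. exists []. split; [reflexivity | split; [constructor | intros x []]]. Qed.

Lemma atleast_1 (P : X -> Prop) x : P x -> atleast P 1.
Proof. intros H. exists [x]. repeat split; [repeat constructor; simpl; tauto|]. now intros y [<-|[]]. Qed.

Lemma atleast_le (P : X -> Prop) j k : k <= j -> atleast P j -> atleast P k.
Proof.
  intros Hk [l [Hlen [Hnd Hl]]]. exists (firstn k l). repeat split.
  - rewrite length_firstn. lia.
  - rewrite <- (firstn_skipn k l) in Hnd. eapply NoDup_app_remove_r; eauto.
  - intros x Hx. apply Hl. rewrite <- (firstn_skipn k l). apply in_or_app; auto.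
Qed.

Lemma atleast_exists (P : X -> Prop) j : 1 <= j -> atleast P j -> exists x, P x.
Proof.
  intros Hj [[|x l] [Hlen [_ Hl]]]; simpl in Hlen; [lia|]. exists x. apply Hl. now left.
Qed.

Lemma atleast_none (P : X -> Prop) j : (forall x, ~ P x) -> (atleast P j <-> j = 0).
Proof.
  intros H; split.
  - intros Hj. destruct j; [reflexivity|]. destruct (atleast_exists P (S j)) as [x Hx]; auto.
    + lia.
    + now destruct (H x).
  - intros ->. apply atleast_0.
Qed.

Lemma atleast_unique (P : X -> Prop) j :
  (forall x y, P x -> P y -> x = y) -> atleast P j -> j <= 1.
Proof.
  intros H [[|a [|b l]] [<- [Hnd Hl]]]; simpl; try lia.
  inversion Hnd as [|? ? Hab]; subst. exfalso. apply Hab. left. apply H; apply Hl; simpl; auto.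
Qed.

Lemma atleast_remove (P : X -> Prop) d j :
  P d -> (atleast (fun x => P x /\ x <> d) j <-> atleast P (S j)).
Proof.
  intros Hd; split.
  - intros [l [Hlen [Hnd Hl]]]. exists (d :: l). repeat split.
    + simpl; lia.
    + constructor; auto. intros Hin. now apply (Hl d Hin).
    + intros x [<-|Hx]; auto. now apply Hl.
  - intros [l [Hlen [Hnd Hl]]].
    destruct (classic (In d l)) as [Hin|Hnin].
    + destruct (in_split _ _ Hin) as [l1 [l2 ->]].
      exists (l1 ++ l2). repeat split.
      * rewrite length_app in *; simpl in Hlen; lia.
      * eapply NoDup_remove_1; eauto.
      * apply Hl. apply in_or_app. apply in_app_or in H. simpl. tauto.
      * intros ->. now apply (NoDup_remove_2 _ _ _ Hnd).
    + destruct l as [|a l']; simpl in Hlen; [lia|].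
      exists l'. repeat split.
      * lia.
      * now inversion Hnd.
      * apply Hl; simpl; auto.
      * intros ->. apply Hnin; simpl; auto.
Qed.

(* The [W i] act as labels: requiring [x] to carry label [i] but no smaller one makes the
   witnesses for different [i] distinct. *)
Lemma atleast_of_labels (Q : X -> Prop) (W : nat -> X -> Prop) k :
  (forall i, i < k -> exists x, Q x /\ W i x /\ forall j, j < i -> ~ W j x) ->
  atleast Q k.
Proof.
  intros H.
  assert (Hl : exists l, length l = k /\ NoDup l /\
                 forall x, In x l -> Q x /\ exists i, i < k /\ W i x).
  { induction k as [|k IH].
    - exists []. split; [reflexivity | split; [constructor | intros x []]].
    - destruct IH as [l [Hlen [Hnd Hl]]]; [intros i Hi; apply H; lia|].
      destruct (H k ltac:(lia)) as [x [Qx [Wx Nx]]].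
      exists (l ++ [x]). split; [rewrite length_app; simpl; lia|split].
      + apply NoDup_app; [auto | repeat constructor; simpl; tauto |].
        intros a Ha [Ea|[]]; subst a. destruct (Hl x Ha) as [_ [i [Hi Wi]]]. exact (Nx i Hi Wi).
      + intros y Hy. apply in_app_or in Hy as [Hy|[<-|[]]].
        * destruct (Hl y Hy) as [Qy [i [Hi Wi]]]. split; [|exists i]; auto.
        * split; [|exists k]; auto. }
  destruct Hl as [l [Hlen [Hnd Hl]]]. exists l. repeat split; auto. intros x Hx; apply Hl; auto.
Qed.

Fixpoint capped_count (P : X -> Prop) (N : nat) : nat :=
  match N with
  | 0 => 0
  | S N' => if excluded_middle_informative (atleast P (S N')) then S N'
            else capped_count P N'
  end.

Lemma capped_count_atleast P N : atleast P (capped_count P N).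
Proof.
  induction N as [|N IH]; simpl; [apply atleast_0|].
  destruct excluded_middle_informative; auto.
Qed.

Lemma capped_count_le P N : capped_count P N <= N.
Proof. induction N as [|N IH]; simpl; [lia|]. destruct excluded_middle_informative; lia. Qed.

Lemma capped_count_max P N j : j <= N -> atleast P j -> j <= capped_count P N.
Proof.
  induction N as [|N IH]; simpl; intros Hj HP; [lia|].
  destruct excluded_middle_informative as [H|H]; [lia|].
  destruct (Nat.eq_dec j (S N)) as [->|Hne]; [contradiction|]. apply IH; auto; lia.
Qed.

Lemma atleast_iff_le_capped_count P N j :
  j <= N -> (atleast P j <-> j <= capped_count P N).
Proof.
  intros Hj; split; [now apply capped_count_max|].
  intros H. exact (atleast_le _ _ _ H (capped_count_atleast P N)).
Qed.

End Counting.

Lemma atleast_map {X Y : Type} (f : X -> Y) (P : X -> Prop) (Q : Y -> Prop) j :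
  Injective f -> (forall x, P x -> Q (f x)) -> (forall y, Q y -> exists x, P x /\ f x = y) ->
  (atleast P j <-> atleast Q j).
Proof.
  intros Hinj HPQ HQP. split.
  - intros [l [Hlen [Hnd Hl]]]. exists (map f l). repeat split.
    + now rewrite length_map.
    + now apply Injective_map_NoDup.
    + intros y Hy. apply in_map_iff in Hy as [x [<- Hx]]. auto.
  - intros [l [Hlen [Hnd Hl]]].
    assert (Hpre : exists l', map f l' = l /\ forall x, In x l' -> P x).
    { clear Hlen Hnd. induction l as [|y l IH].
      - now exists [].
      - destruct IH as [l' [E Hl']]; [intros; apply Hl; simpl; auto|].
        destruct (HQP y (Hl y (or_introl eq_refl))) as [x [Px <-]].
        exists (x :: l'). simpl. split; [congruence|]. intros z [<-|Hz]; auto. }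
    destruct Hpre as [l' [<- Hl']]. exists l'. repeat split; auto.
    + now rewrite length_map in Hlen.
    + eapply NoDup_map_inv; eauto.
Qed.

Lemma atleast_interval (a : Z) (c j : nat) :
  atleast (fun z => (a <= z < a + Z.of_nat c)%Z) j <-> j <= c.
Proof.
  set (range := fun c => map (fun i => (a + Z.of_nat i)%Z) (seq 0 c)).
  assert (Hrange : forall c z, In z (range c) <-> (a <= z < a + Z.of_nat c)%Z).
  { intros c' z. unfold range. rewrite in_map_iff. split.
    - intros [i [<- Hi]]. apply in_seq in Hi. lia.
    - intros Hz. exists (Z.to_nat (z - a)). split; [lia|]. apply in_seq. lia. }
  assert (Hnd : forall c, NoDup (range c)).
  { intros c'. apply Injective_map_NoDup; [intros i i'; lia|]. apply seq_NoDup. }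
  split.
  - intros [l [<- [Hl Hin]]].
    replace c with (length (range c)) by (unfold range; now rewrite length_map, length_seq).
    apply NoDup_incl_length; auto. intros z Hz. apply Hrange; auto.
  - intros Hj. exists (range j). split; [|split; [apply Hnd|]].
    + unfold range. now rewrite length_map, length_seq.
    + intros z Hz. apply Hrange in Hz. lia.
Qed.

(* In a point-generated Euclidean frame the root sees exactly the petals and every other
   point sees exactly the non-root points; in the flower [F_m^n] the root is [0], the petals
   are [1..m] and the stem is [m+1..m+n]. *)
Inductive kind := Root | Petal | Stem.

Definition kind_rel (a b : kind) : Prop :=
  match a, b with
  | Root, Petal => True
  | Root, _ | _, Root => False
  | _, _ => True
  end.

Definition kinded (F : frame) (k : F -> kind) : Prop :=
  forall x y, fR F x y <-> kind_rel (k x) (k y).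

Definition fresh {X : Type} (k : X -> kind) (K : kind) (l : list X) (x : X) : Prop :=
  k x = K /\ ~ In x l.

Lemma atleast_fresh_cons_in {X} (k : X -> kind) K l a j :
  In a l -> (atleast (fresh k K (a :: l)) j <-> atleast (fresh k K l) j).
Proof.
  intros Ha. apply atleast_iff. unfold fresh; simpl.
  intros x; split; [tauto|]. intros [Hk Hx]; split; auto. intros [->|H]; auto.
Qed.

Lemma atleast_fresh_cons_other {X} (k : X -> kind) K l a j :
  k a <> K -> (atleast (fresh k K (a :: l)) j <-> atleast (fresh k K l) j).
Proof.
  intros Ha. apply atleast_iff. unfold fresh; simpl.
  intros x; split; [tauto|]. intros [Hk Hx]; split; auto. intros [->|H]; auto.
Qed.

Lemma atleast_fresh_cons {X} (k : X -> kind) K l a j :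
  fresh k K l a -> (atleast (fresh k K (a :: l)) j <-> atleast (fresh k K l) (S j)).
Proof.
  intros Ha. rewrite <- atleast_remove by exact Ha. apply atleast_iff. unfold fresh; simpl.
  intros x; split.
  - intros [Hk Hx]. repeat split; auto.
  - intros [[Hk Hx] Hxa]. split; auto. intros [->|H]; auto.
Qed.

Lemma in_map_fst {A B : Type} (P : list (A * B)) a b : In (a, b) P -> In a (map fst P).
Proof. exact (in_map fst P (a, b)). Qed.

Lemma in_map_snd {A B : Type} (P : list (A * B)) a b : In (a, b) P -> In b (map snd P).
Proof. exact (in_map snd P (a, b)). Qed.

(* A position of the Ehrenfeucht-Fraisse game: a kind-preserving partial bijection [P]
   (hence, for kinded frames, a partial isomorphism) such that the unmatched points of each
   kind are equally numerous up to [q]; Duplicator can then survive [q] more rounds. *)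
Definition ef_position (F1 F2 : frame) (k1 : F1 -> kind) (k2 : F2 -> kind)
    (q : nat) (P : list (F1 * F2)) : Prop :=
  (forall a b, In (a, b) P -> k1 a = k2 b) /\
  (forall a b a' b', In (a, b) P -> In (a', b') P -> (a = a' <-> b = b')) /\
  (forall K j, j <= q ->
     (atleast (fresh k1 K (map fst P)) j <-> atleast (fresh k2 K (map snd P)) j)).

Lemma ef_forth F1 F2 k1 k2 q P d1 :
  ef_position F1 F2 k1 k2 (S q) P -> exists d2, ef_position F1 F2 k1 k2 q ((d1, d2) :: P).
Proof.
  intros [Hkind [Hbij Hcount]].
  destruct (classic (In d1 (map fst P))) as [Hold|Hnew].
  - apply in_map_iff in Hold as [[a d2] [Ea Hin]]. simpl in Ea; subst a.
    exists d2.
    assert (Hsub : forall ab, In ab ((d1, d2) :: P) -> In ab P) by (intros ab [<-|H]; auto).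
    split; [|split].
    + intros a b H. apply Hkind, Hsub, H.
    + intros a b a' b' H H'. apply Hbij; apply Hsub; auto.
    + intros K j Hj. simpl.
      rewrite atleast_fresh_cons_in by exact (in_map_fst _ _ _ Hin).
      rewrite atleast_fresh_cons_in by exact (in_map_snd _ _ _ Hin).
      apply Hcount; lia.
  - assert (Hd1 : fresh k1 (k1 d1) (map fst P) d1) by (split; auto).
    destruct (atleast_exists (fresh k2 (k1 d1) (map snd P)) 1) as [d2 Hd2]; auto.
    { apply Hcount; [lia|]. exact (atleast_1 _ _ Hd1). }
    exists d2. destruct Hd2 as [Hk2 Hnew2]. split; [|split].
    + intros a b [E|H]; [injection E as <- <-|]; auto.
    + intros a b a' b' [E|H] [E'|H'];
        try (injection E as <- <-); try (injection E' as <- <-); auto; [tauto| |].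
      * split; intros ->; exfalso; eauto using in_map_fst, in_map_snd.
      * split; intros ->; exfalso; eauto using in_map_fst, in_map_snd.
    + intros K j Hj. simpl. destruct (classic (k1 d1 = K)) as [<-|HK].
      * rewrite atleast_fresh_cons by exact Hd1.
        rewrite atleast_fresh_cons by (split; auto).
        apply Hcount; lia.
      * rewrite atleast_fresh_cons_other by exact HK.
        rewrite atleast_fresh_cons_other by congruence.
        apply Hcount; lia.
Qed.

Definition swap_pairs {A B : Type} (P : list (A * B)) : list (B * A) :=
  map (fun ab => (snd ab, fst ab)) P.

Lemma swap_pairs_involutive {A B : Type} (P : list (A * B)) : swap_pairs (swap_pairs P) = P.
Proof. unfold swap_pairs. rewrite map_map. simpl. induction P as [|[a b] P IH]; simpl; f_equal; auto. Qed.

Lemma ef_position_swap F1 F2 k1 k2 q P :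
  ef_position F1 F2 k1 k2 q P -> ef_position F2 F1 k2 k1 q (swap_pairs P).
Proof.
  unfold swap_pairs. intros [Hkind [Hbij Hcount]]. split; [|split].
  - intros a b H. apply in_map_iff in H as [[x y] [E H]]. injection E as <- <-.
    symmetry; eauto.
  - intros a b a' b' H H'.
    apply in_map_iff in H as [[x y] [E H]]; apply in_map_iff in H' as [[x' y'] [E' H']].
    injection E as <- <-; injection E' as <- <-. symmetry; eauto.
  - intros K j Hj. rewrite !map_map. simpl. symmetry. apply Hcount; auto.
Qed.

Lemma ef_back F1 F2 k1 k2 q P d2 :
  ef_position F1 F2 k1 k2 (S q) P -> exists d1, ef_position F1 F2 k1 k2 q ((d1, d2) :: P).
Proof.
  intros H. apply ef_position_swap in H. destruct (ef_forth _ _ _ _ _ _ d2 H) as [d1 H1].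
  exists d1. apply ef_position_swap in H1. rewrite <- (swap_pairs_involutive P). exact H1.
Qed.

Fixpoint qr (A : foform) : nat :=
  match A with
  | FRel _ _ | FEq _ _ | FBot => 0
  | FNot B => qr B
  | FAnd B C | FOr B C | FImp B C => Nat.max (qr B) (qr C)
  | FAll _ B | FEx _ B => S (qr B)
  end.

Lemma upd_eq {W : Type} (g : nat -> W) x d : upd g x d x = d.
Proof. unfold upd. now rewrite Nat.eqb_refl. Qed.

Lemma upd_neq {W : Type} (g : nat -> W) x d i : i <> x -> upd g x d i = g i.
Proof. unfold upd. intros H. apply Nat.eqb_neq in H. now rewrite H. Qed.

Lemma upd_pairs {X Y : Type} (g1 : nat -> X) (g2 : nat -> Y) P x B d1 d2 :
  (forall i, i <> x /\ free_in i B -> In (g1 i, g2 i) P) ->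
  forall i, free_in i B -> In (upd g1 x d1 i, upd g2 x d2 i) ((d1, d2) :: P).
Proof.
  intros H i Hi. destruct (Nat.eq_dec i x) as [->|Hne].
  - rewrite !upd_eq. now left.
  - rewrite !upd_neq by auto. right. auto.
Qed.

Lemma ef_position_fsat F1 F2 k1 k2 (K1 : kinded F1 k1) (K2 : kinded F2 k2) :
  forall B q P g1 g2, qr B <= q -> ef_position F1 F2 k1 k2 q P ->
    (forall i, free_in i B -> In (g1 i, g2 i) P) ->
    (fsat F1 g1 B <-> fsat F2 g2 B).
Proof.
  intros B; induction B as [i j|i j| |B IH|B IH C IHC|B IH C IHC|B IH C IHC|x B IH|x B IH];
    intros q P g1 g2 Hq HP Hf; simpl in *.
  - destruct HP as [Hkind _]. rewrite (K1 (g1 i) (g1 j)), (K2 (g2 i) (g2 j)).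
    rewrite (Hkind _ _ (Hf i (or_introl eq_refl))), (Hkind _ _ (Hf j (or_intror eq_refl))).
    tauto.
  - destruct HP as [_ [Hbij _]]. apply Hbij; auto.
  - tauto.
  - rewrite (IH q P g1 g2); auto. tauto.
  - rewrite (IH q P g1 g2), (IHC q P g1 g2); auto; tauto || lia.
  - rewrite (IH q P g1 g2), (IHC q P g1 g2); auto; tauto || lia.
  - rewrite (IH q P g1 g2), (IHC q P g1 g2); auto; tauto || lia.
  - destruct q as [|q]; [lia|].
    pose proof (fun d1 d2 => upd_pairs g1 g2 P x B d1 d2 Hf) as Hup.
    split.
    + intros H d2. destruct (ef_back _ _ _ _ _ _ d2 HP) as [d1 HP'].
      rewrite <- (IH q _ _ _ ltac:(lia) HP' (Hup d1 d2)). apply H.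
    + intros H d1. destruct (ef_forth _ _ _ _ _ _ d1 HP) as [d2 HP'].
      rewrite (IH q _ _ _ ltac:(lia) HP' (Hup d1 d2)). apply H.
  - destruct q as [|q]; [lia|].
    pose proof (fun d1 d2 => upd_pairs g1 g2 P x B d1 d2 Hf) as Hup.
    split.
    + intros [d1 H]. destruct (ef_forth _ _ _ _ _ _ d1 HP) as [d2 HP'].
      exists d2. rewrite <- (IH q _ _ _ ltac:(lia) HP' (Hup d1 d2)). apply H.
    + intros [d2 H]. destruct (ef_back _ _ _ _ _ _ d2 HP) as [d1 HP'].
      exists d1. rewrite (IH q _ _ _ ltac:(lia) HP' (Hup d1 d2)). apply H.
Qed.

Lemma kind_counts_fmodels F1 F2 k1 k2 (K1 : kinded F1 k1) (K2 : kinded F2 k2) A :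
  sentence A ->
  (forall K j, j <= qr A ->
     (atleast (fun x => k1 x = K) j <-> atleast (fun y => k2 y = K) j)) ->
  (fmodels F1 A <-> fmodels F2 A).
Proof.
  intros HA Hcount.
  assert (HP : ef_position F1 F2 k1 k2 (qr A) []).
  { split; [|split]; simpl; try tauto.
    intros K j Hj. unfold fresh; simpl.
    rewrite (atleast_iff _ (fun x => k1 x = K)) by tauto.
    rewrite (atleast_iff (fun y => k2 y = K /\ ~ False) (fun y => k2 y = K)) by tauto.
    auto. }
  assert (Hfree : forall g1 g2 i, free_in i A -> In (g1 i, g2 i) (@nil (F1 * F2)))
    by (intros g1 g2 i Hi; destruct (HA i Hi)).
  split.
  - intros H g2. destruct (fne F1) as [a].
    rewrite <- (ef_position_fsat F1 F2 k1 k2 K1 K2 A _ _ (fun _ => a) g2 (le_n _) HP (Hfree _ _)).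
    apply H.
  - intros H g1. destruct (fne F2) as [a].
    rewrite (ef_position_fsat F1 F2 k1 k2 K1 K2 A _ _ g1 (fun _ => a) (le_n _) HP (Hfree _ _)).
    apply H.
Qed.

Definition cluster {F : frame} (s x : F) : Prop := exists u, fR F s u /\ fR F u x.

Definition stem {F : frame} (s x : F) : Prop := cluster s x /\ ~ fR F s x.

Section Euclidean.
Variable F : frame.
Hypothesis HE : euclidean F.

Lemma euclid_rel (s x y : F) : fR F s x -> fR F s y -> fR F x y.
Proof. intros Hx Hy. exact (proj1 (HE s x y Hx Hy)). Qed.

Lemma succ_cluster (s x : F) : fR F s x -> cluster s x.
Proof. intros H. exists x. split; auto. eapply euclid_rel; eauto. Qed.

Lemma cluster_rel (s x y : F) : cluster s x -> cluster s y -> fR F x y.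
Proof.
  intros [u [Hsu Hux]] [v [Hsv Hvy]].
  assert (Hvx : fR F v x) by (apply (euclid_rel u); auto; eapply euclid_rel; eauto).
  eapply euclid_rel; eauto.
Qed.

Lemma cluster_closed (s x y : F) : cluster s x -> fR F x y -> cluster s y.
Proof.
  intros [u [Hsu Hux]] Hxy. exists u. split; auto.
  assert (Hxu : fR F x u) by (apply (euclid_rel u); auto; eapply euclid_rel; eauto).
  eapply euclid_rel; eauto.
Qed.

Lemma reach_root_or_cluster (s t : F) : clos_refl_trans F (fR F) s t -> t = s \/ cluster s t.
Proof.
  intros H. apply clos_rt_rt1n in H. induction H as [|x y z Hxy _ IH]; auto.
  right. destruct IH as [->|Hz].
  - now apply succ_cluster.
  - destruct Hz as [u [Hyu Huz]]. eapply cluster_closed; [|exact Huz].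
    eapply cluster_closed; [apply succ_cluster; exact Hxy|exact Hyu].
Qed.

Lemma cluster_reach (s x : F) : cluster s x -> clos_refl_trans F (fR F) s x.
Proof. intros [u [H1 H2]]. eapply rt_trans; apply rt_step; eauto. Qed.

Lemma refl_no_stem (s x : F) : fR F s s -> ~ stem s x.
Proof.
  intros Hss [[u [Hsu Hux]] Hsx]. apply Hsx.
  apply (euclid_rel u); auto. eapply euclid_rel; eauto.
Qed.

Lemma reach_has_succ (s y : F) :
  clos_refl_trans F (fR F) s y -> (exists u, fR F s u) -> exists u, fR F y u.
Proof.
  intros Hy [u Hu]. destruct (reach_root_or_cluster s y Hy) as [->|Hc]; eauto.
  exists y. eapply cluster_rel; eauto.
Qed.

Definition gen_kind (s : F) (x : gen_subframe F s) : kind :=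
  if excluded_middle_informative (fR F s (proj1_sig x)) then Petal
  else if excluded_middle_informative (proj1_sig x = s) then Root else Stem.

Lemma gen_kind_root s x : gen_kind s x = Root <-> proj1_sig x = s /\ ~ fR F s s.
Proof.
  unfold gen_kind.
  destruct excluded_middle_informative as [H|H]; [|destruct excluded_middle_informative as [H'|H']].
  - split; [discriminate|]. intros [E Hn]. rewrite E in H. contradiction.
  - rewrite H' in H. tauto.
  - split; [discriminate|tauto].
Qed.

Lemma gen_kind_petal s x : gen_kind s x = Petal <-> fR F s (proj1_sig x).
Proof.
  unfold gen_kind.
  destruct excluded_middle_informative; [|destruct excluded_middle_informative]; split;
    congruence || tauto.
Qed.

Lemma gen_kind_stem s x : gen_kind s x = Stem <-> stem s (proj1_sig x).
Proof.
  destruct x as [x Hx]. unfold gen_kind, stem; simpl.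
  destruct excluded_middle_informative as [H|H]; [|destruct excluded_middle_informative as [->|H']].
  - split; [discriminate|tauto].
  - split; [discriminate|]. intros [Hc _]. exfalso. apply H. eapply cluster_rel; eauto.
  - split; [|reflexivity]. intros _. split; auto.
    destruct (reach_root_or_cluster s x Hx); [contradiction|assumption].
Qed.

Lemma gen_kind_not_root s x : gen_kind s x <> Root <-> cluster s (proj1_sig x).
Proof.
  rewrite gen_kind_root. destruct x as [x Hx]; simpl. split.
  - intros H. destruct (reach_root_or_cluster s x Hx) as [->|Hc]; auto.
    apply succ_cluster. apply NNPP. intros Hn. auto.
  - intros Hc [-> Hn]. apply Hn. eapply cluster_rel; eauto.
Qed.

Lemma gen_kinded s : kinded (gen_subframe F s) (gen_kind s).
Proof.
  intros x y. simpl.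
  destruct (classic (gen_kind s x = Root)) as [Hx|Hx].
  - rewrite Hx. apply gen_kind_root in Hx as [-> Hn].
    destruct (gen_kind s y) eqn:Ey; simpl.
    + apply gen_kind_root in Ey as [-> _]. tauto.
    + apply gen_kind_petal in Ey. tauto.
    + apply gen_kind_stem in Ey as [_ Ey]. tauto.
  - assert (Hrel : kind_rel (gen_kind s x) (gen_kind s y) <-> gen_kind s y <> Root)
      by (destruct (gen_kind s x), (gen_kind s y); simpl; intuition congruence).
    rewrite Hrel, gen_kind_not_root. apply gen_kind_not_root in Hx. split.
    + intros; eapply cluster_closed; eauto.
    + intros; eapply cluster_rel; eauto.
Qed.

Lemma gen_subframe_atleast s (P : F -> Prop) j :
  (forall x, P x -> clos_refl_trans F (fR F) s x) ->
  (atleast (fun x : gen_subframe F s => P (proj1_sig x)) j <-> atleast P j).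
Proof.
  intros HP. apply (atleast_map (@proj1_sig _ _)).
  - intros x y. apply proj1_sig_inj.
  - auto.
  - intros y Hy. now exists (exist _ y (HP y Hy)).
Qed.

Lemma gen_kind_petal_count s j :
  atleast (fun x => gen_kind s x = Petal) j <-> atleast (fR F s) j.
Proof.
  rewrite (atleast_iff _ _ _ (gen_kind_petal s)).
  apply gen_subframe_atleast. intros; now apply rt_step.
Qed.

Lemma gen_kind_stem_count s j :
  atleast (fun x => gen_kind s x = Stem) j <-> atleast (stem s) j.
Proof.
  rewrite (atleast_iff _ _ _ (gen_kind_stem s)).
  apply gen_subframe_atleast. intros x [Hx _]. now apply cluster_reach.
Qed.

Lemma gen_kind_root_count s j :
  atleast (fun x => gen_kind s x = Root) j <-> j = 0 \/ (j = 1 /\ ~ fR F s s).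
Proof.
  rewrite (atleast_iff _ _ _ (gen_kind_root s)).
  destruct (classic (fR F s s)) as [Hs|Hs].
  - rewrite atleast_none by tauto. tauto.
  - split.
    + intros H. apply atleast_unique in H.
      * destruct j as [|[|]]; [left|right|lia]; auto.
      * intros x y [Hx _] [Hy _]. apply proj1_sig_inj. congruence.
    + intros [->|[-> _]]; [apply atleast_0|]. now apply (atleast_1 _ (gen_root F s)).
Qed.

End Euclidean.

Local Open Scope Z_scope.

(* Innermost comparisons are split first, so that every case hypothesis is about atoms. *)
Ltac zcases :=
  repeat (match goal with
          | |- context [?a =? ?b] =>
              lazymatch a with context [if _ then _ else _] => fail | _ => idtac end;
              destruct (Z.eqb_spec a b)
          | |- context [?a <=? ?b] =>
              lazymatch a with context [if _ then _ else _] => fail | _ => idtac end;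
              destruct (Z.leb_spec a b)
          end; cbv beta iota).

Lemma flower_pt_iff m n z :
  flower_pt m n z = true <-> (0 <= n /\ 0 <= z <= m + n) \/ (n < 0 /\ 1 <= z <= m).
Proof. unfold flower_pt. zcases; simpl; rewrite ?andb_true_iff, ?Z.leb_le; lia. Qed.

Definition zkind (m z : Z) : kind := if z =? 0 then Root else if z <=? m then Petal else Stem.

Definition flower_kind (m n : Z) (x : flower_carrier m n) : kind := zkind m (proj1_sig x).

Lemma flower_kinded m n Hm Hn : kinded (@flower m n Hm Hn) (flower_kind m n).
Proof.
  intros [x hx] [y hy]. simpl. unfold flower_kind, zkind, flower_rel; simpl.
  apply flower_pt_iff in hx, hy. zcases; simpl; lia.
Qed.

Definition kind_start (m : Z) (K : kind) : Z :=
  match K with Root => 0 | Petal => 1 | Stem => m + 1 end.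

Definition flower_count (m n : Z) (K : kind) : nat :=
  match K with
  | Root => if 0 <=? n then 1 else 0
  | Petal => Z.to_nat m
  | Stem => Z.to_nat n
  end.

Lemma flower_kind_interval m n z K :
  1 <= m -> -1 <= n ->
  (flower_pt m n z = true /\ zkind m z = K <->
   kind_start m K <= z < kind_start m K + Z.of_nat (flower_count m n K)).
Proof.
  intros Hm Hn. rewrite flower_pt_iff. unfold zkind.
  destruct K; cbn [kind_start flower_count]; zcases; intuition (try reflexivity; try discriminate; lia).
Qed.

Lemma flower_kind_count m n Hm Hn K j :
  atleast (fun x : @flower m n Hm Hn => flower_kind m n x = K) j <->
  (j <= flower_count m n K)%nat.
Proof.
  rewrite <- (atleast_interval (kind_start m K)).
  apply (atleast_map (@proj1_sig _ _)).
  - intros x y. apply proj1_sig_inj.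
  - intros [z hz] Hz. now apply flower_kind_interval.
  - intros z Hz. apply flower_kind_interval in Hz as [hz Hk]; auto.
    now exists (exist _ z hz).
Qed.

(* Points outside the flower are sent to the junk value [1]. *)
Definition flower_point m n (Hm : 1 <= m) (Hn : -1 <= n) (z : Z) : @flower m n Hm Hn :=
  match Bool.bool_dec (flower_pt m n z) true with
  | left H => exist _ z H
  | right _ => exist _ 1 (flower_pt_one Hm Hn)
  end.

Lemma flower_point_val m n Hm Hn z :
  flower_pt m n z = true -> proj1_sig (flower_point m n Hm Hn z) = z.
Proof. intros H. unfold flower_point. destruct Bool.bool_dec; simpl; congruence. Qed.

Definition kind_compat (a b : kind) : Prop := a = b \/ (a = Stem /\ b = Petal).

Lemma kind_rel_compat a a' b b' :
  kind_compat a a' -> kind_compat b b' -> kind_rel a b -> kind_rel a' b'.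
Proof. unfold kind_compat. destruct a, a', b, b'; simpl; intuition discriminate. Qed.

Lemma kind_rel_compat_l a a' c : kind_compat a a' -> kind_rel a' c -> kind_rel a c.
Proof. unfold kind_compat. destruct a, a', c; simpl; intuition discriminate. Qed.

Lemma kind_compat_bm_image F1 F2 k1 k2 (K1 : kinded F1 k1) (K2 : kinded F2 k2) (f : F1 -> F2) :
  (forall x, kind_compat (k1 x) (k2 (f x))) ->
  (forall y, exists x, f x = y /\ k1 x = k2 y) ->
  bm_image F2 F1.
Proof.
  intros Hc Honto. exists f. split; [split|].
  - intros x y Hxy. apply K2. apply K1 in Hxy. eapply kind_rel_compat; eauto.
  - intros x t Ht. destruct (Honto t) as [x' [<- Hk]]. exists x'. split; auto.
    apply K1. rewrite Hk. apply K2 in Ht. eapply kind_rel_compat_l; eauto.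
  - intros y. destruct (Honto y) as [x [E _]]; eauto.
Qed.

Lemma onto_universal_bm_image (F1 F2 : frame) (f : F1 -> F2) :
  (forall a b : F2, fR F2 a b) ->
  (forall y, exists x', f x' = y /\ forall x, fR F1 x x') ->
  bm_image F2 F1.
Proof.
  intros Huniv Honto. exists f. split; [split|].
  - intros; apply Huniv.
  - intros x t _. destruct (Honto t) as [x' [<- Hx']]. eauto.
  - intros y. destruct (Honto y) as [x [E _]]; eauto.
Qed.

Lemma flower_bm_image_of_values F1 k1 (K1 : kinded F1 k1) m n Hm Hn (v : F1 -> Z) :
  (forall x, flower_pt m n (v x) = true /\ kind_compat (k1 x) (zkind m (v x))) ->
  (forall z, flower_pt m n z = true -> exists x, v x = z /\ k1 x = zkind m z) ->
  bm_image (@flower m n Hm Hn) F1.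
Proof.
  intros Hval Honto.
  apply (kind_compat_bm_image F1 (@flower m n Hm Hn) k1 (flower_kind m n) K1 (flower_kinded m n Hm Hn)
           (fun x => flower_point m n Hm Hn (v x))).
  - intros x. unfold flower_kind. rewrite flower_point_val; apply Hval.
  - intros [z hz]. destruct (Honto z hz) as [x [Ex Hk]]. exists x. split; auto.
    apply proj1_sig_inj. simpl. rewrite flower_point_val; apply Hval || auto.
Qed.

Lemma flower_onto_cluster M N k HM HN Hk Hl :
  k <= M -> bm_image (@flower k (-1) Hk Hl) (@flower M N HM HN).
Proof.
  intros HkM.
  apply (onto_universal_bm_image (@flower M N HM HN) (@flower k (-1) Hk Hl)
           (fun x => flower_point k (-1) Hk Hl (Z.max 1 (Z.min (proj1_sig x) k)))).
  - intros [a ha] [b hb]. simpl. unfold flower_rel; simpl.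
    rewrite flower_pt_iff in ha, hb. lia.
  - intros [z hz]. pose proof (proj1 (flower_pt_iff _ _ _) hz) as Hz.
    assert (hz' : flower_pt M N z = true) by (apply flower_pt_iff; lia).
    exists (exist _ z hz'). split.
    + apply proj1_sig_inj. rewrite flower_point_val; simpl; [lia|].
      apply flower_pt_iff; lia.
    + intros [x hx]. simpl. unfold flower_rel; simpl. rewrite flower_pt_iff in hx. lia.
Qed.

(* Petals are folded onto the first [k] petals and stem points onto the first [l] stem
   points; if [l = 0] the stem is sent to a petal. *)
Lemma flower_onto_flower M N k l HM HN Hk Hl :
  k <= M -> l = -1 \/ 0 <= l <= N ->
  bm_image (@flower k l Hk Hl) (@flower M N HM HN).
Proof.
  intros HkM [->|Hl'].
  - now apply flower_onto_cluster.
  - set (g := fun z => if z =? 0 then 0 else if z <=? M then Z.min z k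
                       else if l =? 0 then 1 else k + Z.min (z - M) l).
    apply (flower_bm_image_of_values _ _ (flower_kinded M N HM HN) k l Hk Hl
             (fun x => g (proj1_sig x))).
    + intros [z hz]. unfold flower_kind, g, kind_compat, zkind; simpl.
      rewrite flower_pt_iff in hz |- *.
      zcases; intuition (try reflexivity; try discriminate; lia).
    + intros y hy. rewrite flower_pt_iff in hy.
      set (z := if y <=? k then y else M + (y - k)).
      assert (hz : flower_pt M N z = true) by (apply flower_pt_iff; unfold z; zcases; lia).
      exists (exist _ z hz). unfold flower_kind, g, z, zkind; simpl.
      zcases; split; (reflexivity || lia).
Qed.

(* The position of [x] in [l], or the junk value [0] if [x] does not occur in [l]. *)
Definition index_in {X : Type} (d : X) (l : list X) (x : X) : nat :=
  match excluded_middle_informative (exists i, (i < length l)%nat /\ nth i l d = x) with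
  | left H => proj1_sig (constructive_indefinite_description _ H)
  | right _ => 0%nat
  end.

Lemma index_in_lt {X : Type} (d : X) l x : l <> [] -> (index_in d l x < length l)%nat.
Proof.
  intros Hl. unfold index_in. destruct excluded_middle_informative as [H|H].
  - exact (proj1 (proj2_sig (constructive_indefinite_description _ H))).
  - destruct l; [contradiction|simpl; lia].
Qed.

Lemma index_in_nth {X : Type} (d : X) l i :
  NoDup l -> (i < length l)%nat -> index_in d l (nth i l d) = i.
Proof.
  intros Hnd Hi. unfold index_in. destruct excluded_middle_informative as [H|H].
  - destruct (proj2_sig (constructive_indefinite_description _ H)) as [Hj E].
    exact (proj1 (NoDup_nth l d) Hnd _ i Hj Hi E).
  - exfalso. eauto.
Qed.

Section OntoFlower.
Variables (F : frame) (t : F) (lP lS : list F) (m n : Z).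
Hypotheses (HE : euclidean F) (Hm : 1 <= m)
  (HlP : NoDup lP) (HlP_length : Z.of_nat (length lP) = m)
  (HlP_succ : forall x, In x lP -> fR F t x)
  (HlS : NoDup lS) (HlS_stem : forall x, In x lS -> stem t x)
  (Hrefl : fR F t t -> n = -1) (Hirrefl : ~ fR F t t -> n = Z.of_nat (length lS))
  (HlS_nil : forall x, stem t x -> lS <> []).

Definition flower_value (x : gen_subframe F t) : Z :=
  match gen_kind F t x with
  | Root => 0
  | Petal => 1 + Z.of_nat (index_in t lP (proj1_sig x))
  | Stem => m + 1 + Z.of_nat (index_in t lS (proj1_sig x))
  end.

Lemma flower_value_spec x :
  flower_pt m n (flower_value x) = true /\ gen_kind F t x = zkind m (flower_value x).
Proof.
  unfold flower_value. rewrite flower_pt_iff. unfold zkind.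
  destruct (gen_kind F t x) eqn:Ek.
  - apply gen_kind_root in Ek as [_ Ht]. specialize (Hirrefl Ht).
    zcases; split; (reflexivity || lia).
  - assert (HlP_nil : lP <> []) by (intros ->; simpl in HlP_length; lia).
    pose proof (index_in_lt t lP (proj1_sig x) HlP_nil).
    zcases; split; (reflexivity || lia).
  - apply (gen_kind_stem F HE) in Ek.
    assert (Ht : ~ fR F t t) by (intros Ht; exact (refl_no_stem F HE t _ Ht Ek)).
    specialize (Hirrefl Ht).
    pose proof (index_in_lt t lS (proj1_sig x) (HlS_nil _ Ek)).
    zcases; split; (reflexivity || lia).
Qed.

Lemma flower_value_onto z :
  flower_pt m n z = true -> exists x, flower_value x = z /\ gen_kind F t x = zkind m z.
Proof.
  rewrite flower_pt_iff. intros Hz. unfold flower_value, zkind.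
  destruct (Z.eqb_spec z 0) as [->|Hz0]; [|destruct (Z.leb_spec z m) as [Hzm|Hzm]].
  - assert (Ht : ~ fR F t t) by (intros Ht; specialize (Hrefl Ht); lia).
    exists (gen_root F t).
    assert (Hk : gen_kind F t (gen_root F t) = Root) by (now apply gen_kind_root).
    now rewrite Hk.
  - set (i := Z.to_nat (z - 1)).
    assert (Hi : (i < length lP)%nat) by lia.
    assert (Hx : fR F t (nth i lP t)) by (apply HlP_succ, nth_In, Hi).
    exists (exist _ (nth i lP t) (rt_step _ _ _ _ Hx)).
    rewrite (proj2 (gen_kind_petal F t (exist _ _ _)) Hx). cbn [proj1_sig].
    rewrite index_in_nth by auto. split; [unfold i; lia|reflexivity].
  - assert (Ht : ~ fR F t t) by (intros Ht; specialize (Hrefl Ht); lia).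
    specialize (Hirrefl Ht).
    set (i := Z.to_nat (z - m - 1)).
    assert (Hi : (i < length lS)%nat) by lia.
    assert (Hx : stem t (nth i lS t)) by (apply HlS_stem, nth_In, Hi).
    exists (exist _ (nth i lS t) (cluster_reach F t _ (proj1 Hx))).
    rewrite (proj2 (gen_kind_stem F HE t (exist _ _ _)) Hx). cbn [proj1_sig].
    rewrite index_in_nth by auto. split; [unfold i; lia|reflexivity].
Qed.

Lemma gen_subframe_onto_flower Hn : bm_image (@flower m n Hm Hn) (gen_subframe F t).
Proof.
  apply (flower_bm_image_of_values _ _ (gen_kinded F HE t) m n Hm Hn flower_value).
  - intros x. destruct (flower_value_spec x) as [Hpt Hk]. split; [exact Hpt|now left].
  - exact flower_value_onto.
Qed.

End OntoFlower.

Section Truncation.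
Variables (F : frame) (N : nat).

(* [Nat.max 1] keeps this a flower when [t] has no successor or [N = 0]. *)
Definition petal_number (t : F) : Z := Z.of_nat (Nat.max 1 (capped_count (fR F t) N)).

Definition stem_number (t : F) : Z :=
  if excluded_middle_informative (fR F t t) then -1
  else Z.of_nat (capped_count (stem t) N).

Lemma petal_number_ge1 t : 1 <= petal_number t.
Proof. unfold petal_number. lia. Qed.

Lemma stem_number_ge t : -1 <= stem_number t.
Proof. unfold stem_number. destruct excluded_middle_informative; lia. Qed.

Definition truncation (t : F) : frame := flower (petal_number_ge1 t) (stem_number_ge t).

Lemma stem_number_le t : stem_number t <= Z.of_nat N.
Proof.
  unfold stem_number. pose proof (capped_count_le (stem t) N).
  destruct excluded_middle_informative; lia.
Qed.

Hypothesis HN : (1 <= N)%nat.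

Lemma petal_number_le t : petal_number t <= Z.of_nat N.
Proof. unfold petal_number. pose proof (capped_count_le (fR F t) N). lia. Qed.

Lemma petal_number_capped t :
  (exists u, fR F t u) -> petal_number t = Z.of_nat (capped_count (fR F t) N).
Proof.
  intros [u Hu]. unfold petal_number.
  pose proof (capped_count_max (fR F t) N 1 HN (atleast_1 _ _ Hu)). lia.
Qed.

Hypothesis HE : euclidean F.

Lemma truncation_onto t : (exists u, fR F t u) -> bm_image (truncation t) (gen_subframe F t).
Proof.
  intros Hsucc.
  destruct (capped_count_atleast (fR F t) N) as [lP [HlP_length [HlP HlP_succ]]].
  destruct (capped_count_atleast (stem t) N) as [lS [HlS_length [HlS HlS_stem]]].
  apply (gen_subframe_onto_flower F t lP lS); auto.
  - rewrite HlP_length. symmetry. now apply petal_number_capped.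
  - intros Ht. unfold stem_number. now destruct excluded_middle_informative.
  - intros Ht. unfold stem_number. destruct excluded_middle_informative; [contradiction|].
    now rewrite HlS_length.
  - intros x Hx E. rewrite E in HlS_length. simpl in HlS_length.
    pose proof (capped_count_max (stem t) N 1 HN (atleast_1 _ _ Hx)). lia.
Qed.

Lemma truncation_fmodels A t :
  sentence A -> (qr A <= N)%nat -> (exists u, fR F t u) ->
  (fmodels (gen_subframe F t) A <-> fmodels (truncation t) A).
Proof.
  intros HA HqN Hsucc.
  apply (kind_counts_fmodels _ _ _ _ (gen_kinded F HE t) (flower_kinded _ _ _ _) A HA).
  intros K j Hj. rewrite flower_kind_count. unfold flower_count.
  destruct K.
  - rewrite gen_kind_root_count. unfold stem_number.
    destruct excluded_middle_informative as [Ht|Ht]; zcases; try lia.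
    + split; [intros [->|[_ Hn]]; [lia|contradiction]|intros; left; lia].
    + split; [intros [->|[-> _]]; lia|intros; destruct j as [|[|]]; [left|right|lia]; auto].
  - rewrite gen_kind_petal_count, (atleast_iff_le_capped_count _ N) by lia.
    rewrite petal_number_capped by exact Hsucc. lia.
  - rewrite (gen_kind_stem_count F HE). unfold stem_number.
    destruct excluded_middle_informative as [Ht|Ht].
    + rewrite atleast_none by exact (fun x => refl_no_stem F HE t x Ht). lia.
    + rewrite (atleast_iff_le_capped_count _ N) by lia. lia.
Qed.

End Truncation.

Definition point_frame : frame := @Frame unit (fun _ _ => False) (inhabits tt).

Lemma point_frame_kinded : kinded point_frame (fun _ => Root).
Proof. intros x y; simpl; tauto. Qed.

Lemma point_frame_count K j :
  atleast (fun _ : point_frame => Root = K) j <-> j = 0%nat \/ (j = 1%nat /\ K = Root).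
Proof.
  destruct K.
  - split.
    + intros H. apply atleast_unique in H; [|now intros [] []].
      destruct j as [|[|]]; [left|right|lia]; auto.
    + intros [->|[-> _]]; [apply atleast_0|exact (atleast_1 _ tt eq_refl)].
  - rewrite atleast_none by discriminate. intuition discriminate.
  - rewrite atleast_none by discriminate. intuition discriminate.
Qed.

Section DeadEnd.
Variables (F : frame) (s : F).
Hypotheses (HE : euclidean F) (Hdead : ~ exists u, fR F s u).

Lemma dead_end_gen_kind x : gen_kind F s x = Root.
Proof.
  apply gen_kind_root. destruct x as [x Hx]; simpl.
  destruct (reach_root_or_cluster F HE s x Hx) as [->|[u [Hu _]]].
  - split; eauto.
  - exfalso; eauto.
Qed.

Lemma dead_end_fmodels A : sentence A ->
  (fmodels (gen_subframe F s) A <-> fmodels point_frame A).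
Proof.
  intros HA. apply (kind_counts_fmodels _ _ _ _ (gen_kinded F HE s) point_frame_kinded A HA).
  intros K j _. rewrite point_frame_count. destruct K.
  - rewrite gen_kind_root_count. assert (~ fR F s s) by eauto. intuition.
  - rewrite gen_kind_petal_count, atleast_none by eauto. intuition discriminate.
  - rewrite (gen_kind_stem_count F HE), atleast_none by (intros x [[u [Hu _]] _]; eauto).
    intuition discriminate.
Qed.

Lemma dead_end_onto_point : bm_image point_frame (gen_subframe F s).
Proof.
  apply (kind_compat_bm_image _ _ _ _ (gen_kinded F HE s) point_frame_kinded (fun _ => tt)).
  - intros x. left. apply dead_end_gen_kind.
  - intros []. exists (gen_root F s). split; auto. apply dead_end_gen_kind.
Qed.

End DeadEnd.

Definition MAnd (a b : mform) : mform := MNeg (MOr (MNeg a) (MNeg b)).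
Definition MTop : mform := MNeg MBot.
Definition MConj (l : list mform) : mform := fold_right MAnd MTop l.

Lemma msat_and F V w a b : msat F V w (MAnd a b) <-> msat F V w a /\ msat F V w b.
Proof. simpl. split; [intros H; split; apply NNPP; tauto | tauto]. Qed.

Lemma msat_conj F V w l : msat F V w (MConj l) <-> forall a, In a l -> msat F V w a.
Proof.
  induction l as [|a l IH]; simpl MConj.
  - simpl. split; [intros _ a []|tauto].
  - rewrite msat_and, IH. simpl. split.
    + intros [H1 H2] b [<-|Hb]; auto.
    + intros H; split; auto.
Qed.

Lemma msat_conj_seq F V w (f : nat -> mform) k :
  msat F V w (MConj (map f (seq 0 k))) <-> forall i, (i < k)%nat -> msat F V w (f i).
Proof.
  rewrite msat_conj. split.
  - intros H i Hi. apply H, in_map, in_seq. lia.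
  - intros H a Ha. apply in_map_iff in Ha as [i [<- Hi]]. apply in_seq in Hi. apply H. lia.
Qed.

Local Open Scope nat_scope.

Definition labelled (b i : nat) : mform :=
  MAnd (MVar (b + i)) (MConj (map (fun j => MNeg (MVar (b + j))) (seq 0 i))).

Lemma msat_labelled F V x b i :
  msat F V x (labelled b i) <-> V (b + i) x /\ forall j, j < i -> ~ V (b + j) x.
Proof. unfold labelled. rewrite msat_and, msat_conj_seq. reflexivity. Qed.

Definition many_succ (b k : nat) : mform :=
  MConj (map (fun i => MDia (labelled b i)) (seq 0 k)).

Definition many_stem (b l : nat) : mform :=
  MConj (map (fun i => MAnd (MDia (MDia (labelled b i))) (MBox (MNeg (MVar (b + i)))))
             (seq 0 l)).

Lemma msat_many_succ_atleast F V t b k :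
  msat F V t (many_succ b k) -> atleast (fR F t) k.
Proof.
  unfold many_succ. rewrite msat_conj_seq. intros H.
  apply (atleast_of_labels _ (fun i x => V (b + i) x)). intros i Hi.
  apply H, msat_dia in Hi as [x [Hx Hl]]. apply msat_labelled in Hl. eauto.
Qed.

Lemma msat_many_stem_atleast F V t b l :
  msat F V t (many_stem b l) -> atleast (stem t) l.
Proof.
  unfold many_stem. rewrite msat_conj_seq. intros H.
  apply (atleast_of_labels _ (fun i x => V (b + i) x)). intros i Hi.
  apply H, msat_and in Hi as [Hdd Hbox]. apply msat_dia in Hdd as [u [Hu Hd]].
  apply msat_dia in Hd as [x [Hx Hl]]. apply msat_labelled in Hl as [Hi Hj].
  exists x. split; [split|split; auto].
  - exists u. auto.
  - intros Htx. exact (Hbox x Htx Hi).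
Qed.

Definition nth_valuation {F : frame} (l : list F) (d : F) : nat -> F -> Prop :=
  fun v x => x = nth v l d.

Lemma nth_valuation_labelled (F : frame) (l : list F) d b i :
  (forall j, j < i -> nth (b + j) l d <> nth (b + i) l d) ->
  msat F (nth_valuation l d) (nth (b + i) l d) (labelled b i).
Proof.
  intros H. apply msat_labelled. unfold nth_valuation.
  split; [reflexivity|]. intros j Hj E. exact (H j Hj (eq_sym E)).
Qed.

Lemma nth_NoDup_neq {X : Type} (l : list X) d i j :
  NoDup l -> j < length l -> i < length l -> j <> i -> nth j l d <> nth i l d.
Proof. intros Hnd Hj Hi Hji E. exact (Hji (proj1 (NoDup_nth l d) Hnd j i Hj Hi E)). Qed.

Definition cluster_formula (k : nat) : mform := MNeg (many_succ 0 k).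

(* At a refutation, [p_(k+l)] marks the point itself, [p_0..p_(k-1)] label [k] petals and
   [p_k..p_(k+l-1)] label [l] stem points. *)
Definition flower_formula (k l : nat) : mform :=
  MNeg (MAnd (MAnd (MVar (k + l)) (MBox (MNeg (MVar (k + l)))))
             (MAnd (many_succ 0 k) (many_stem k l))).

Lemma cluster_formula_refuted F V t k :
  ~ msat F V t (cluster_formula k) -> atleast (fR F t) k.
Proof. intros H. apply NNPP in H. exact (msat_many_succ_atleast F V t 0 k H). Qed.

Lemma flower_formula_refuted F V t k l :
  ~ msat F V t (flower_formula k l) ->
  ~ fR F t t /\ atleast (fR F t) k /\ atleast (stem t) l.
Proof.
  intros H. apply NNPP in H. rewrite !msat_and in H.
  destruct H as [[Hmark Hbox] [Hsucc Hstem]]. repeat split.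
  - intros Htt. exact (Hbox t Htt Hmark).
  - exact (msat_many_succ_atleast F V t 0 k Hsucc).
  - exact (msat_many_stem_atleast F V t k l Hstem).
Qed.

Lemma cluster_formula_refutable (F : frame) (t : F) lP :
  NoDup lP -> (forall x, In x lP -> fR F t x) ->
  ~ msat F (nth_valuation lP t) t (cluster_formula (length lP)).
Proof.
  intros Hnd HlP H. apply H. unfold many_succ. apply msat_conj_seq. intros i Hi.
  apply msat_dia. exists (nth i lP t). split.
  - apply HlP, nth_In, Hi.
  - apply (nth_valuation_labelled F lP t 0 i). intros j Hj. apply nth_NoDup_neq; auto; lia.
Qed.

Lemma flower_formula_refutable (F : frame) (t : F) lP lS :
  NoDup lP -> (forall x, In x lP -> fR F t x) ->
  NoDup lS -> (forall x, In x lS -> stem t x) -> ~ fR F t t ->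
  ~ msat F (nth_valuation (lP ++ lS ++ [t]) t) t (flower_formula (length lP) (length lS)).
Proof.
  intros HlP HlP_succ HlS HlS_stem Htt H. apply H. clear H.
  set (l := lP ++ lS ++ [t]).
  assert (Hpetal : forall i, i < length lP -> nth (0 + i) l t = nth i lP t)
    by (intros i Hi; apply app_nth1, Hi).
  assert (Hstem : forall i, i < length lS -> nth (length lP + i) l t = nth i lS t).
  { intros i Hi. unfold l. rewrite app_nth2 by lia. rewrite app_nth1 by lia. f_equal; lia. }
  assert (Hmark : nth (length lP + length lS) l t = t).
  { unfold l. rewrite app_nth2 by lia. rewrite app_nth2 by lia.
    now replace (length lP + length lS - length lP - length lS) with 0 by lia. }
  rewrite !msat_and. split; [split|split].
  - simpl. unfold nth_valuation. now rewrite Hmark.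
  - simpl. unfold nth_valuation. rewrite Hmark. intros v Hv ->. contradiction.
  - unfold many_succ. apply msat_conj_seq. intros i Hi. apply msat_dia.
    exists (nth i lP t). split; [apply HlP_succ, nth_In, Hi|].
    rewrite <- Hpetal by exact Hi. apply nth_valuation_labelled. intros j Hj.
    rewrite !Hpetal by lia. apply nth_NoDup_neq; auto; lia.
  - unfold many_stem. apply msat_conj_seq. intros i Hi.
    destruct (HlS_stem (nth i lS t) (nth_In _ _ Hi)) as [[u [Hu Hux]] Hnot].
    apply msat_and. split.
    + apply msat_dia. exists u. split; auto. apply msat_dia. exists (nth i lS t).
      split; auto. rewrite <- Hstem by exact Hi. apply nth_valuation_labelled. intros j Hj.
      rewrite !Hstem by lia. apply nth_NoDup_neq; auto; lia.
    + simpl. unfold nth_valuation. rewrite Hstem by exact Hi. intros v Hv ->. contradiction.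
Qed.

Local Open Scope Z_scope.

Definition shape_formula (kl : Z * Z) : mform :=
  if snd kl <? 0 then cluster_formula (Z.to_nat (fst kl))
  else flower_formula (Z.to_nat (fst kl)) (Z.to_nat (snd kl)).

Lemma shape_formula_refuted (F : frame) V (t : F) k l :
  ~ msat F V t (shape_formula (k, l)) ->
  atleast (fR F t) (Z.to_nat k) /\ (0 <= l -> ~ fR F t t /\ atleast (stem t) (Z.to_nat l)).
Proof.
  unfold shape_formula; simpl. destruct (Z.ltb_spec l 0) as [Hl|Hl]; intros H.
  - split; [exact (cluster_formula_refuted F V t _ H)|lia].
  - apply flower_formula_refuted in H as [Htt [Hsucc Hstem]]. auto.
Qed.

Section TruncationShape.
Variables (F : frame) (N : nat).
Hypothesis HN : (1 <= N)%nat.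

Lemma truncation_shape_refutable t :
  (exists u, fR F t u) ->
  exists V, ~ msat F V t (shape_formula (petal_number F N t, stem_number F N t)).
Proof.
  intros Hsucc. unfold shape_formula; cbn [fst snd].
  destruct (capped_count_atleast (fR F t) N) as [lP [HlP_length [HlP HlP_succ]]].
  destruct (capped_count_atleast (stem t) N) as [lS [HlS_length [HlS HlS_stem]]].
  rewrite (petal_number_capped F N HN), Nat2Z.id, <- HlP_length by exact Hsucc.
  unfold stem_number. destruct excluded_middle_informative as [Ht|Ht].
  - rewrite (proj2 (Z.ltb_lt _ _)) by lia.
    exists (nth_valuation lP t). now apply cluster_formula_refutable.
  - rewrite (proj2 (Z.ltb_ge _ _)), Nat2Z.id, <- HlS_length by lia.
    exists (nth_valuation (lP ++ lS ++ [t]) t). now apply flower_formula_refutable.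
Qed.

Lemma truncation_onto_shape x V k l Hk Hl :
  k <= Z.of_nat N -> l <= Z.of_nat N -> ~ msat F V x (shape_formula (k, l)) ->
  bm_image (@flower k l Hk Hl) (truncation F N x).
Proof.
  intros HkN HlN H. apply shape_formula_refuted in H as [Hsucc Hstem].
  unfold truncation. apply flower_onto_flower.
  - rewrite (petal_number_capped F N HN) by exact (atleast_exists _ (Z.to_nat k) ltac:(lia) Hsucc).
    pose proof (capped_count_max _ N (Z.to_nat k) ltac:(lia) Hsucc). lia.
  - destruct (Z_lt_le_dec l 0) as [Hneg|Hnn]; [left; lia|right].
    destruct (Hstem Hnn) as [Ht Hl'].
    unfold stem_number. destruct excluded_middle_informative; [contradiction|].
    pose proof (capped_count_max _ N (Z.to_nat l) ltac:(lia) Hl'). lia.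
Qed.

End TruncationShape.

Definition small_shapes (N : nat) : list (Z * Z) :=
  list_prod (map Z.of_nat (seq 1 N)) (map (fun i => Z.of_nat i - 1) (seq 0 (N + 2))).

Lemma in_small_shapes N k l :
  In (k, l) (small_shapes N) <-> 1 <= k <= Z.of_nat N /\ -1 <= l <= Z.of_nat N.
Proof.
  unfold small_shapes. rewrite in_prod_iff, !in_map_iff. split.
  - intros [[i [<- Hi]] [j [<- Hj]]]. apply in_seq in Hi, Hj. lia.
  - intros [Hk Hl]. split.
    + exists (Z.to_nat k). rewrite in_seq. split; lia.
    + exists (Z.to_nat (l + 1)). rewrite in_seq. split; lia.
Qed.

Definition refuting_shape (L : mform -> Prop) (A : foform) (kl : Z * Z) : Prop :=
  exists Hk Hl, validates (@flower (fst kl) (snd kl) Hk Hl) L /\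
                ~ fmodels (@flower (fst kl) (snd kl) Hk Hl) A.

Definition refuting_point (L : mform -> Prop) (A : foform) : Prop :=
  validates point_frame L /\ ~ fmodels point_frame A.

Definition serial_formula : mform := MDia MTop.

Lemma msat_serial (F : frame) V (t : F) : msat F V t serial_formula <-> exists u, fR F t u.
Proof. unfold serial_formula. rewrite msat_dia. simpl. firstorder. Qed.

(* By [truncation_fmodels], flowers with more than [qr A + 1] petals or stem points need not
   be excluded. *)
Definition defining_formula (L : mform -> Prop) (A : foform) : mform :=
  MAnd (if excluded_middle_informative (refuting_point L A) then serial_formula else MTop)
       (MConj (map (fun kl => if excluded_middle_informative (refuting_shape L A kl)
                              then shape_formula kl else MTop)
                   (small_shapes (S (qr A))))).

Lemma mvalid_defining_formula L A G :
  mvalid G (defining_formula L A) <->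
  (refuting_point L A -> mvalid G serial_formula) /\
  (forall kl, In kl (small_shapes (S (qr A))) -> refuting_shape L A kl ->
     mvalid G (shape_formula kl)).
Proof.
  unfold defining_formula, mvalid. split.
  - intros H. split.
    + intros Hpt V w. specialize (H V w). apply msat_and in H as [H _].
      destruct excluded_middle_informative; tauto.
    + intros kl Hin Hsh V w. specialize (H V w). rewrite msat_and, msat_conj in H.
      destruct H as [_ H].
      specialize (H (if excluded_middle_informative (refuting_shape L A kl)
                     then shape_formula kl else MTop)).
      destruct excluded_middle_informative; [|contradiction].
      apply H, in_map_iff. exists kl. split; auto.
      destruct excluded_middle_informative; tauto.
  - intros [Hpt Hsh] V w. rewrite msat_and, msat_conj. split.
    + destruct excluded_middle_informative; [apply Hpt; auto|simpl; auto].
    + intros a Ha. apply in_map_iff in Ha as [kl [<- Hin]].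
      destruct excluded_middle_informative; [apply Hsh; auto|simpl; auto].
Qed.

Section Definability.
Variables (L : mform -> Prop) (A : foform).
Hypotheses (HL : euclidean_logic L) (HA : sentence A).

Lemma fmodels_of_defining_formula F s :
  validates F L -> mvalid (gen_subframe F s) (defining_formula L A) ->
  fmodels (gen_subframe F s) A.
Proof.
  intros HF Hdef. apply mvalid_defining_formula in Hdef as [Hpoint Hshape].
  assert (HE := validates_euclidean L F HL HF).
  assert (HG := gen_subframe_validates F s L HF).
  set (N := S (qr A)). assert (HN : (1 <= N)%nat) by lia.
  apply NNPP. intros Hnot.
  destruct (classic (exists u, fR F s u)) as [Hsucc|Hdead].
  - assert (Hin : In (petal_number F N s, stem_number F N s) (small_shapes N)).
    { apply in_small_shapes. pose proof (petal_number_ge1 F N s).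
      pose proof (petal_number_le F N HN s). pose proof (stem_number_ge F N s).
      pose proof (stem_number_le F N s). lia. }
    assert (Href : refuting_shape L A (petal_number F N s, stem_number F N s)).
    { exists (petal_number_ge1 F N s), (stem_number_ge F N s). split.
      - exact (bm_image_validates _ _ L (truncation_onto F N HN HE s Hsucc) HG).
      - rewrite <- (truncation_fmodels F N HN HE A s HA ltac:(lia) Hsucc). exact Hnot. }
    specialize (Hshape _ Hin Href). rewrite gen_subframe_mvalid in Hshape.
    destruct (truncation_shape_refutable F N HN s Hsucc) as [V HV].
    exact (HV (Hshape V (gen_root F s))).
  - assert (Hpt : refuting_point L A).
    { split.
      - exact (bm_image_validates _ _ L (dead_end_onto_point F s HE Hdead) HG).
      - rewrite <- (dead_end_fmodels F s HE Hdead A HA). exact Hnot. }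
    destruct (proj1 (msat_serial _ _ _) (Hpoint Hpt (fun _ _ => False) (gen_root F s)))
      as [[u Hu] Hsu].
    exact (Hdead (ex_intro _ u Hsu)).
Qed.

Hypothesis Hgen : forall F : frame, euclidean F -> validates F L ->
  (fmodels F A <-> forall s : F, fmodels (gen_subframe F s) A).
Hypothesis Hflower : forall (m n m' n' : Z) (Hm : 1 <= m) (Hn : -1 <= n)
  (Hm' : 1 <= m') (Hn' : -1 <= n'),
  validates (flower Hm Hn) L -> fmodels (flower Hm Hn) A ->
  bm_image (flower Hm' Hn') (flower Hm Hn) -> fmodels (flower Hm' Hn') A.

Lemma defining_formula_of_fmodels F s :
  validates F L -> fmodels (gen_subframe F s) A ->
  mvalid (gen_subframe F s) (defining_formula L A).
Proof.
  intros HF HGA. set (G := gen_subframe F s).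
  assert (HE := validates_euclidean L F HL HF).
  assert (HGL := gen_subframe_validates F s L HF).
  assert (HGE := validates_euclidean L G HL HGL).
  assert (Hsub : forall x : G, fmodels (gen_subframe G x) A) by now apply Hgen.
  set (N := S (qr A)). assert (HN : (1 <= N)%nat) by lia.
  apply mvalid_defining_formula. split.
  - intros [_ Hpt] V [x Hx]. apply msat_serial.
    destruct (classic (exists u, fR F s u)) as [Hsucc|Hdead].
    + destruct (reach_has_succ F HE s x Hx Hsucc) as [u Hu].
      now exists (exist _ u (rt_trans _ _ _ _ _ Hx (rt_step _ _ _ _ Hu))).
    + exfalso. apply Hpt. now rewrite <- (dead_end_fmodels F s HE Hdead A HA).
  - intros [k l] Hin [Hk [Hl [HVL HnA]]] V x. apply NNPP. intros Hrefuted. apply HnA.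
    apply in_small_shapes in Hin. cbn [fst snd] in *.
    assert (Hsucc : exists u, fR G x u).
    { apply shape_formula_refuted in Hrefuted as [Hsucc _].
      exact (atleast_exists _ (Z.to_nat k) ltac:(lia) Hsucc). }
    apply (Hflower _ _ k l (petal_number_ge1 G N x) (stem_number_ge G N x) Hk Hl).
    + exact (bm_image_validates _ _ L (truncation_onto G N HN HGE x Hsucc)
               (gen_subframe_validates G x L HGL)).
    + rewrite <- (truncation_fmodels G N HN HGE A x HA ltac:(lia) Hsucc). apply Hsub.
    + apply (truncation_onto_shape G N HN x V); tauto || lia.
Qed.

End Definability.

Theorem proposition4 (L : mform -> Prop) (HL : euclidean_logic L) (A : foform)
  (HA : sentence A) :
  modally_definable (Fr L) A <->
  ((forall F : frame, euclidean F -> validates F L ->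
      (fmodels F A <-> forall s : F, fmodels (@gen_subframe F s) A)) /\
   (forall (m n m' n' : Z) (Hm : (1 <= m)%Z) (Hn : (-1 <= n)%Z)
           (Hm' : (1 <= m')%Z) (Hn' : (-1 <= n')%Z),
      validates (flower Hm Hn) L ->
      fmodels (flower Hm Hn) A ->
      bm_image (flower Hm' Hn') (flower Hm Hn) ->
      fmodels (flower Hm' Hn') A)).
Proof.
  split.
  - intros [phi Hphi]. split.
    + intros F HE HF. rewrite <- (Hphi F HF), mvalid_iff_gen_subframes.
      split; intros H s; apply (Hphi _ (gen_subframe_validates F s L HF)); auto.
    + intros m n m' n' Hm Hn Hm' Hn' HV HAm Hb.
      apply (Hphi _ (bm_image_validates _ _ L Hb HV)).
      apply (bm_image_mvalid _ _ phi Hb). now apply Hphi.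
  - intros [Hgen Hflower]. exists (defining_formula L A). intros F HF.
    rewrite mvalid_iff_gen_subframes, (Hgen F (validates_euclidean L F HL HF) HF).
    split; intros H s.
    + now apply (fmodels_of_defining_formula L A HL HA).
    + now apply (defining_formula_of_fmodels L A HL HA Hgen Hflower).
Qed.
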